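(* Let $\alpha:X\to P(A\times X+1)$ be a discrete probabilistic transition system and let $\tilde\alpha^\#=\langle\tilde\alpha^\#_1,\tilde\alpha^\#_*,a\mapsto\tau_a\rangle:DX\to \mathbb I\times\mathbb I\times(DX)^A$ be $$\tilde\alpha^\#_1(u)=\sum_{x\in X}u(x)\sum_{z\in A\times X+1}\alpha(x)(z),\quad \tilde\alpha^\#_*(u)=\sum_{x\in X}u(x)\alpha(x)( * ),\quad \tau_a(u)(y)=\sum_{x\in X}u(x)\alpha(x)(a,y).$$ Then there is a unique map $[\![-]\!]:DX\to\mathcal M(A^\infty)$ such that for all $u\in DX$, $a\in A$: $[\![u]\!](A^\infty)=\tilde\alpha^\#_1(u)$, $[\![u]\!](\{\varepsilon\})=\tilde\alpha^\#_*(u)$, and $[\![u]\!]_a=[\![\tau_a(u)]\!]$ (i.e. $[\![-]\!]$ is an $F$-coalgebra morphism from $\tilde\alpha^\#$ to $\Pi$). Moreover, writing $\langle\!\langle x\rangle\!\rangle=[\![\delta_x]\!]$, for every $u\in DX$, $$[\![u]\!]=\sum_{x\in X}u(x)\,\langle\!\langle x\rangle\!\rangle.$$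
   Context: $X$ is a set, $A$ a finite alphabet, $1=\{*\}$, $\mathbb I=[0,1]$. $PY$ (resp. $DY$) is the set of finitely supported functions $u:Y\to\mathbb I$ with $\sum_y u(y)=1$ (resp. $\le1$). $\delta_x\in DX$ is the point mass at $x$. $A^\infty=A^*\cup A^\omega$ (finite and infinite words, empty word $\varepsilon$) with $\sigma$-algebra generated by $\{\emptyset\}\cup\{\{w\}\mid w\in A^*\}\cup\{wA^\infty\mid w\in A^*\}$, $wS=\{wv\mid v\in S\}$. $\mathcal M(A^\infty)$ is the set of sub-probability measures on $A^\infty$; for $m\in\mathcal M(A^\infty)$ and $a\in A$, $m_a(S)=m(aS)$. The coalgebra $\Pi:\mathcal M(A^\infty)\to\mathbb I\times\mathbb I\times\mathcal M(A^\infty)^A$ is $\Pi(m)=\langle m(A^\infty),m(\{\varepsilon\}),a\mapsto m_a\rangle$. *)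

From Stdlib Require Import Reals List ClassicalEpsilon.
Open Scope R_scope.
Set Implicit Arguments.

Definition fin_supp (Y : Type) (f : Y -> R) (l : list Y) : Prop :=
  NoDup l /\ forall y, f y <> 0 -> In y l.

(* sum_{y in Y} f y for finitely supported f (0 otherwise; the value does
   not depend on the chosen support list) *)
Definition fsum (Y : Type) (f : Y -> R) : R :=
  match excluded_middle_informative (exists l, fin_supp f l) with
  | left H => fold_right Rplus 0 (map f (proj1_sig (constructive_indefinite_description _ H)))
  | right _ => 0
  end.

Definition isP (Y : Type) (u : Y -> R) : Prop :=
  (forall y, 0 <= u y <= 1) /\ (exists l, fin_supp u l) /\ fsum u = 1.

Definition isD (Y : Type) (u : Y -> R) : Prop :=
  (forall y, 0 <= u y <= 1) /\ (exists l, fin_supp u l) /\ fsum u <= 1.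

Definition dirac (X : Type) (x : X) : X -> R :=
  fun y => if excluded_middle_informative (y = x) then 1 else 0.

Inductive word (A : Type) : Type :=
| Fin : list A -> word A
| Inf : (nat -> A) -> word A.

Definition wcons (A : Type) (a : A) (w : word A) : word A :=
  match w with
  | Fin s => Fin (a :: s)
  | Inf f => Inf (fun n => match n with O => a | S k => f k end)
  end.

Definition wapp (A : Type) (s : list A) (w : word A) : word A :=
  fold_right (@wcons A) w s.

Definition wset (A : Type) := word A -> Prop.

Definition wempty (A : Type) : wset A := fun _ => False.
Definition wfull (A : Type) : wset A := fun _ => True.
Definition wsingle (A : Type) (s : list A) : wset A := fun v => v = Fin s.
Definition wcyl (A : Type) (s : list A) : wset A := fun v => exists v', v = wapp s v'.
Definition wprefix (A : Type) (a : A) (S : wset A) : wset A :=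
  fun v => exists v', S v' /\ v = wcons a v'.
Definition wcompl (A : Type) (S : wset A) : wset A := fun v => ~ S v.
Definition wbigcup (A : Type) (F : nat -> wset A) : wset A := fun v => exists n, F n v.

Inductive measurable (A : Type) : wset A -> Prop :=
| meas_empty : measurable (@wempty A)
| meas_single : forall s, measurable (wsingle s)
| meas_cyl : forall s, measurable (wcyl s)
| meas_compl : forall S, measurable S -> measurable (wcompl S)
| meas_bigcup : forall F : nat -> wset A,
    (forall n, measurable (F n)) -> measurable (wbigcup F).

(* sub-probability measures on A^infty; a measure is represented by a set
   function, only its values on measurable sets matter *)
Definition is_subprob (A : Type) (m : wset A -> R) : Prop :=
  m (@wempty A) = 0 /\
  (forall S, measurable S -> 0 <= m S) /\
  (forall F : nat -> wset A,
      (forall n, measurable (F n)) ->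
      (forall i j v, i <> j -> F i v -> F j v -> False) ->
      infinite_sum (fun n => m (F n)) (m (wbigcup F))) /\
  m (@wfull A) <= 1.

Section Lift.
Variables (A X : Type) (alpha : X -> (A * X + unit) -> R).

Definition alpha1 (u : X -> R) : R := fsum (fun x => u x * fsum (alpha x)).
Definition alphastar (u : X -> R) : R := fsum (fun x => u x * alpha x (inr tt)).
Definition tau (a : A) (u : X -> R) : X -> R :=
  fun y => fsum (fun x => u x * alpha x (inl (a, y))).

Definition is_coalg_morphism (sem : (X -> R) -> wset A -> R) : Prop :=
  forall u, isD u ->
    is_subprob (sem u) /\
    sem u (@wfull A) = alpha1 u /\
    sem u (wsingle nil) = alphastar u /\
    (forall a S, measurable S -> sem u (wprefix a S) = sem (tau a u) S).
End Lift.

(* A state x is given a random run: from a number om uniform in [0,1), choose the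
   outcome z of alpha x by inverse-CDF sampling (intervals of lengths alpha x z tile
   [0,1)), emit its letter and continue from the successor state with om rescaled to
   [0,1) inside the chosen interval; the outcome * stops the run.  The law <<x>> of
   the run is the image of Lebesgue measure on [0,1), hence a sub-probability measure
   on A^oo, and since rescaling an interval of length p scales Lebesgue measure by p,
   <<x>>(aS) = sum_y alpha x (a,y) <<y>>(S).  So [[u]] := sum_x u(x) <<x>> is a
   coalgebra morphism, linear by construction.  Two morphisms agree on {w} and wA^oo
   by induction on w, since peeling off a letter a replaces u by tau_a u; these sets
   and the empty set form a pi-system generating the sigma-algebra, so Dynkin's
   pi-lambda theorem gives uniqueness. *)

From Stdlib Require Import Reals List.
Open Scope R_scope.
From mathcomp Require all_boot all_algebra all_classical all_reals ereal normedtype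
  sequences measure lebesgue_measure measurable_realfun Rstruct Rstruct_topology.
From Stdlib Require Import Lra Lia Permutation Classical ClassicalEpsilon
  FunctionalExtensionality PropExtensionality.
Import ListNotations.

(** * Lebesgue measure on the reals *)

Module Leb.
Import all_boot all_algebra all_classical all_reals ereal normedtype sequences
  measure lebesgue_measure measurable_realfun Rstruct Rstruct_topology.
Import order.Order.TTheory GRing.Theory Num.Theory.
Local Open Scope ring_scope.
Local Open Scope classical_set_scope.

(* Statements use the Stdlib operations ([Rle], [Rminus], [R0], ...) rather than ring
   notations, so that they apply verbatim outside this module. *)
Definition len (S : R -> Prop) : R := fine (@lebesgue_measure R S).
Definition meas (S : R -> Prop) : Prop := measurable (S : set (R : realType)).
Definition bounded (S : R -> Prop) : Prop :=
  exists a b : R, forall w, S w -> Rle a w /\ Rle w b.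

Lemma Ico_set (a b : R) :
  (fun w => Rle a w /\ Rlt w b) = [set` Interval (BLeft a) (BLeft b)].
Proof.
apply/funext => w /=; rewrite in_itv /= propeqE; split.
  by move=> [/RleP -> /RltP ->].
by move/andP => [/RleP ? /RltP ?].
Qed.

Lemma Icc_set (a b : R) :
  (fun w => Rle a w /\ Rle w b) = [set` Interval (BLeft a) (BRight b)].
Proof.
apply/funext => w /=; rewrite in_itv /= propeqE; split.
  by move=> [/RleP -> /RleP ->].
by move/andP => [/RleP ? /RleP ?].
Qed.

Lemma meas_Ico a b : meas (fun w => Rle a w /\ Rlt w b).
Proof. by rewrite /meas Ico_set; exact: measurable_itv. Qed.

Lemma meas0 : meas (fun _ => False).
Proof. exact: measurable0. Qed.

Lemma measI S T : meas S -> meas T -> meas (fun w => S w /\ T w).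
Proof. exact: measurableI. Qed.

Lemma measU S T : meas S -> meas T -> meas (fun w => S w \/ T w).
Proof. exact: measurableU. Qed.

Lemma measC S : meas S -> meas (fun w => ~ S w).
Proof. exact: measurableC. Qed.

Lemma bigcupE (F : nat -> R -> Prop) : (fun w => exists n, F n w) = \bigcup_n (F n : set R).
Proof. by apply/funext => w; apply/propext; split => [[n Hn]|[n _ Hn]]; exists n. Qed.

Lemma bigcupT_meas (F : nat -> R -> Prop) :
  (forall n, meas (F n)) -> meas (fun w => exists n, F n w).
Proof. by move=> hF; rewrite bigcupE; exact: bigcupT_measurable. Qed.

Lemma affine_measurable (p c : R) :
  measurable_fun (setT : set (R : realType))
    (fun w : (R : realType) => (w - c) / p : (R : realType)).
Proof.
apply: continuous_measurable_fun => w.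
apply: cvgM; last exact: cvg_cst.
by apply: cvgB; [exact: cvg_id | exact: cvg_cst].
Qed.

Lemma meas_affine S p c : meas S -> meas (fun w => S (Rdiv (Rminus w c) p)).
Proof. by move=> hS; have := affine_measurable p c measurableT S hS; rewrite setTI. Qed.

Lemma len_Ico a b : Rle a b -> len (fun w => Rle a w /\ Rlt w b) = Rminus b a.
Proof.
move=> /RleP hab; rewrite /len Ico_set lebesgue_measure_itv /= lte_fin.
case: ifPn => // hba; have -> : a = b by apply/le_anti; rewrite hab leNgt hba.
by rewrite RminusE subrr.
Qed.

Lemma len_ge0 S : Rle R0 (len S).
Proof. by apply/RleP; apply: fine_ge0; exact: measure_ge0. Qed.

Lemma len0 : len (fun _ => False) = R0.
Proof. by rewrite /len (_ : (fun _ => False) = set0) ?measure0. Qed.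

Lemma lebesgue_bounded S : meas S -> bounded S -> @lebesgue_measure R S = (len S)%:E.
Proof.
move=> hS [a [b hab]]; rewrite /len fineK // ge0_fin_numE; last exact: measure_ge0.
apply: (@le_lt_trans _ _ (@lebesgue_measure R [set` Interval (BLeft a) (BRight b)])).
  apply: le_measure.
  - by rewrite inE.
  - by rewrite inE; exact: measurable_itv.
  - by rewrite -Icc_set => w /hab.
by rewrite lebesgue_measure_itv; case: ifP => _; rewrite ltry.
Qed.

Lemma boundedU S T : bounded S -> bounded T -> bounded (fun w => S w \/ T w).
Proof.
move=> [a [b hS]] [a' [b' hT]]; exists (Rmin a a'), (Rmax b b').
move=> w [/hS|/hT] [h1 h2]; split.
- exact: Rle_trans (Rmin_l a a') h1.
- exact: Rle_trans h2 (Rmax_l b b').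
- exact: Rle_trans (Rmin_r a a') h1.
- exact: Rle_trans h2 (Rmax_r b b').
Qed.

Lemma lenU S T : meas S -> meas T -> bounded S -> bounded T ->
  (forall w, S w -> T w -> False) -> len (fun w => S w \/ T w) = Rplus (len S) (len T).
Proof.
move=> hS hT bS bT dST; apply: EFin_inj.
rewrite -lebesgue_bounded ?RplusE ?EFinD -?lebesgue_bounded //;
  [|exact: measU|exact: boundedU].
rewrite (_ : (fun w => S w \/ T w) = S `|` T) // measureU //.
by apply/seteqP; split => w //= [hs ht]; case: (dST w hs ht).
Qed.

Lemma len_sigma_additive (F : nat -> R -> Prop) : (forall n, meas (F n)) ->
  (exists a b, forall n w, F n w -> Rle a w /\ Rle w b) ->
  (forall i j w, i <> j -> F i w -> F j w -> False) ->
  infinite_sum (fun n => len (F n)) (len (fun w => exists n, F n w)).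
Proof.
move=> hF [a [b hab]] dF.
have bF n : bounded (F n) by exists a, b => w; exact: hab.
have mU : meas (fun w => exists n, F n w) by exact: bigcupT_meas.
have bU : bounded (fun w => exists n, F n w) by exists a, b => w [n]; exact: hab.
have tF : trivIset setT (F : nat -> set R).
  move=> i j _ _ [w [hi hj]]; apply: contrapT => nij; exact: (dF i j w nij hi hj).
have : (fun n => \sum_(0 <= i < n) (len (F i))%:E) @ \oo -->
       (len (fun w => exists n, F n w))%:E.
  have -> : (fun n => \sum_(0 <= i < n) (len (F i))%:E) =
            (fun n => \sum_(0 <= i < n) @lebesgue_measure R (F i)).
    by apply/funext => n; apply: eq_bigr => i _; rewrite lebesgue_bounded.
  rewrite -lebesgue_bounded // bigcupE.
  exact: (@measure_sigma_additive _ _ _ (@lebesgue_measure R) (F : nat -> set R) hF tF).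
under eq_fun do rewrite sumEFin.
move/fine_cvgP => [_ H] eps /RltP heps.
have [N _ HN] := (proj1 (@cvgrPdist_lt _ (R : realType) _ _ _ _ _) H) eps heps.
exists N => n /ssrnat.leP hn.
by rewrite /R_dist sum_f_R0E RabsE distrC; apply/RltP; apply: HN; apply: leqW.
Qed.

Lemma lebesgue_affine (B : R -> Prop) (p c : R) : meas B -> Rlt R0 p ->
  @lebesgue_measure R B =
  ((p^-1)%:E * @lebesgue_measure R (fun w => B (Rdiv (Rminus w c) p)))%E.
Proof.
move=> hB /RltP hp.
have hp' : 0 <= p^-1 by rewrite invr_ge0 ltW.
pose h := (fun w : (R : realType) => (w - c) / p : (R : realType))
  : measurableTypeR R -> measurableTypeR R.
have hK w : w = p * h w + c by rewrite /h mulrC divfK ?subrK // gt_eqF.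
have := @lebesgue_measure_unique R (mscale (NngNum hp') (pushforward lebesgue_measure h)).
move=> /(_ (affine_measurable p c)) -> //.
move=> _ [[x y] _ <-].
rewrite [RHS](_ : _ = ((p^-1)%:E * lebesgue_measure (h @^-1` `]x, y]))%E) //.
have -> : h @^-1` `]x, y] = `]p * x + c, p * y + c]%classic.
  apply/seteqP; split => w /=; rewrite !in_itv /= => /andP [h1 h2]; apply/andP.
    by rewrite (hK w) ltrD2r ltr_pM2l // lerD2r ler_pM2l.
  by rewrite -(ltr_pM2l hp) -(ler_pM2l hp) -(ltrD2r c) -(lerD2r c) -!(hK w).
rewrite !lebesgue_measure_itv /= !lte_fin ltrD2r ltr_pM2l //.
case: ifPn => _; last by rewrite mule0.
rewrite -!EFinB -EFinM; congr (_%:E).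
by rewrite opprD addrACA subrr addr0 -mulrBr mulKf // gt_eqF.
Qed.

Lemma bounded_affine S p c : bounded S -> Rlt R0 p ->
  bounded (fun w => S (Rdiv (Rminus w c) p)).
Proof.
move=> [a [b hab]] /RltP hp; exists (p * a + c), (p * b + c) => w /hab [/RleP h1 /RleP h2].
have hw : w = p * ((w - c) / p) + c by rewrite mulrC divfK ?subrK // gt_eqF.
by split; apply/RleP; rewrite hw lerD2r ler_pM2l.
Qed.

Lemma len_affine S p c : meas S -> bounded S -> Rlt R0 p ->
  len (fun w => S (Rdiv (Rminus w c) p)) = Rmult p (len S).
Proof.
move=> hS bS hp; have := lebesgue_affine _ _ c hS hp.
rewrite !lebesgue_bounded //; [|exact: meas_affine|exact: bounded_affine].
move=> H; have {}H : len S = p^-1 * len (fun w => S (Rdiv (Rminus w c) p)).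
  by apply: EFin_inj; rewrite H EFinM.
move/RltP: hp => hp.
by rewrite RmultE H mulrA divff ?mul1r // gt_eqF.
Qed.

(* Dynkin's pi-lambda theorem; membership in the sigma-algebra generated by [G]
   is expressed by the induction principle in the last hypothesis. *)
Lemma pi_lambda (T : Type) (G H : (T -> Prop) -> Prop) :
  (forall A B, G A -> G B -> G (fun t => A t /\ B t)) ->
  H (fun _ => True) ->
  (forall A, H A -> H (fun t => ~ A t)) ->
  (forall F : nat -> T -> Prop, (forall i j t, i <> j -> F i t -> F j t -> False) ->
     (forall n, H (F n)) -> H (fun t => exists n, F n t)) ->
  (forall A, G A -> H A) ->
  forall S, (forall P : (T -> Prop) -> Prop, (forall A, G A -> P A) ->
     (forall A, P A -> P (fun t => ~ A t)) ->
     (forall F : nat -> T -> Prop, (forall n, P (F n)) -> P (fun t => exists n, F n t)) ->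
     P S) ->
  H S.
Proof.
move=> GI HT HC HU GH S hS.
have bigcupE' (F : nat -> set T) : \bigcup_k F k = (fun t => exists n, F n t).
  by apply/funext => w; apply/propext; split => [[n _ Hn]|[n Hn]]; exists n.
have sub : <<s setT, (G : set (set T)) >> `<=` (H : set (set T)).
  apply: lambda_system_subset => //; apply/dynkin_lambda_system; split.
  - exact: HT.
  - by move=> A /HC.
  - move=> F tF hF; rewrite bigcupE'; apply: HU => // i j t nij hi hj.
    by apply: nij; apply: (tF i j) => //; exists t.
apply: sub; apply: hS.
- by move=> A GA; exact: sub_sigma_algebra.
- by move=> A /sigma_algebraCD; rewrite setTD.
- by move=> F hF; rewrite -bigcupE'; exact: sigma_algebra_bigcup.
Qed.

End Leb.

Import Leb.

Lemma pred_ext (T : Type) (S S' : T -> Prop) : (forall t, S t <-> S' t) -> S = S'.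
Proof.
  intro H; apply functional_extensionality; intro t; apply propositional_extensionality; auto.
Qed.

Lemma len_shift S c : meas S -> bounded S ->
  meas (fun w => S (w - c)) /\ bounded (fun w => S (w - c)) /\ len (fun w => S (w - c)) = len S.
Proof.
  intros mS bS.
  replace (fun w => S (w - c)) with (fun w => S ((w - c) / 1))
    by (apply pred_ext; intro w; rewrite Rdiv_1_r; reflexivity).
  split; [apply meas_affine; exact mS|]; split; [apply bounded_affine; auto; lra|].
  rewrite len_affine by (auto; lra); ring.
Qed.

Lemma len_rescale (G : R -> Prop) p : meas G -> (forall r, G r -> 0 <= r < 1) -> 0 <= p ->
  let S := fun w => 0 <= w < p /\ G (w / p) in meas S /\ bounded S /\ len S = p * len G.
Proof.
  intros mG G01 [hp | <-] S.
  - replace S with (fun w => G ((w - 0) / p)).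
    + split; [apply meas_affine; exact mG|].
      split; [apply bounded_affine; [exists 0, 1; intros r Hr; apply G01 in Hr; lra | exact hp]|].
      apply len_affine; [exact mG | exists 0, 1; intros r Hr; apply G01 in Hr; lra | exact hp].
    + apply pred_ext; intro w; rewrite Rminus_0_r; unfold S; split; [|tauto].
      intro Hw; destruct (G01 _ Hw) as [h0 h1]; split; [|exact Hw].
      assert (E : w = p * (w / p)) by (field; lra).
      split; nra.
  - replace S with (fun _ : R => False) by (apply pred_ext; unfold S; intro; lra).
    split; [apply meas0|]; split; [exists 0, 0; tauto|]; rewrite len0; ring.
Qed.

(** * Finite sums *)

Definition lsum {Y : Type} (l : list Y) (f : Y -> R) : R := fold_right Rplus 0 (map f l).

Lemma lsum_cons {Y} (y : Y) l f : lsum (y :: l) f = f y + lsum l f.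
Proof. reflexivity. Qed.

Lemma lsum_perm {Y} (l1 l2 : list Y) f : Permutation l1 l2 -> lsum l1 f = lsum l2 f.
Proof. induction 1; unfold lsum in *; simpl in *; lra. Qed.

Lemma lsum_ext {Y} (l : list Y) f g : (forall y, In y l -> f y = g y) -> lsum l f = lsum l g.
Proof.
  induction l as [|y l IH]; intro H; [reflexivity|].
  rewrite !lsum_cons, H by (left; reflexivity).
  f_equal; apply IH; intros; apply H; right; assumption.
Qed.

Lemma lsum_plus {Y} (l : list Y) f g : lsum l (fun y => f y + g y) = lsum l f + lsum l g.
Proof. induction l; [unfold lsum; simpl; ring | rewrite !lsum_cons, IHl; ring]. Qed.

Lemma lsum_scal {Y} (l : list Y) c f : lsum l (fun y => c * f y) = c * lsum l f.
Proof. induction l; [unfold lsum; simpl; ring | rewrite !lsum_cons, IHl; ring]. Qed.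

Lemma lsum_le {Y} (l : list Y) f g : (forall y, In y l -> f y <= g y) -> lsum l f <= lsum l g.
Proof.
  induction l as [|y l IH]; intro H; [unfold lsum; simpl; lra|].
  rewrite !lsum_cons; apply Rplus_le_compat; [apply H; left | apply IH; intros; apply H; right];
    auto.
Qed.

Lemma lsum_const0 {Y} (l : list Y) : lsum l (fun _ => 0) = 0.
Proof. induction l; [reflexivity | rewrite lsum_cons, IHl; ring]. Qed.

Lemma lsum_ge0 {Y} (l : list Y) f : (forall y, In y l -> 0 <= f y) -> 0 <= lsum l f.
Proof. intro H; rewrite <- (lsum_const0 l); apply lsum_le; auto. Qed.

Lemma lsum_neq0 {Y} (l : list Y) f : lsum l f <> 0 -> exists y, In y l /\ f y <> 0.
Proof.
  induction l as [|y l IH]; intro H; [contradiction|].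
  rewrite lsum_cons in H; destruct (Req_dec (f y) 0) as [Hy|Hy].
  - destruct IH as [y' [Hin Hy']]; [lra|]; exists y'; split; [right|]; auto.
  - exists y; split; [left|]; auto.
Qed.

Lemma lsum_swap {Y Z} (l1 : list Y) (l2 : list Z) (g : Y -> Z -> R) :
  lsum l1 (fun y => lsum l2 (g y)) = lsum l2 (fun z => lsum l1 (fun y => g y z)).
Proof.
  induction l1 as [|y l1 IH]; [symmetry; apply lsum_const0|].
  rewrite lsum_cons, IH, <- lsum_plus; apply lsum_ext; intros; reflexivity.
Qed.

Lemma lsum_filter_neq0 {Y} (l : list Y) f :
  lsum l f = lsum (filter (fun y => if Req_EM_T (f y) 0 then false else true) l) f.
Proof.
  induction l as [|y l IH]; [reflexivity|]; simpl.
  destruct (Req_EM_T (f y) 0) as [H|H]; rewrite ?lsum_cons, IH; [rewrite H; ring | reflexivity].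
Qed.

Lemma fsum_lsum {Y} (f : Y -> R) l : fin_supp f l -> fsum f = lsum l f.
Proof.
  intro Hl; unfold fsum; destruct (excluded_middle_informative _) as [H|H];
    [| exfalso; apply H; exists l; exact Hl].
  destruct (constructive_indefinite_description _ H) as [l' Hl']; simpl.
  change (lsum l' f = lsum l f); rewrite (lsum_filter_neq0 l'), (lsum_filter_neq0 l).
  destruct Hl as [N S], Hl' as [N' S']; apply lsum_perm, NoDup_Permutation;
    try (apply NoDup_filter; assumption).
  intro y; rewrite !filter_In; destruct (Req_EM_T (f y) 0); split; intros [h1 h2];
    try discriminate; auto.
Qed.

Lemma fsum_dirac {Y} (y0 : Y) (f : Y -> R) : fsum (fun y => dirac y0 y * f y) = f y0.
Proof.
  rewrite (fsum_lsum _ [y0]).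
  - unfold lsum, dirac; simpl; destruct (excluded_middle_informative (y0 = y0)); [ring | easy].
  - split; [repeat constructor; auto|]; intros y h; unfold dirac in h.
    destruct (excluded_middle_informative (y = y0)); [left; auto | lra].
Qed.

Lemma lsum_flat_map {Y Z} (h : Z -> list Y) (l : list Z) g :
  lsum (flat_map h l) g = lsum l (fun z => lsum (h z) g).
Proof.
  induction l as [|z l IH]; [reflexivity|].
  simpl flat_map; rewrite lsum_cons, <- IH; unfold lsum; rewrite map_app, fold_right_app.
  generalize (fold_right Rplus 0 (map g (flat_map h l))); intro c.
  induction (h z) as [|y t IHt]; simpl; [ring | rewrite IHt; ring].
Qed.

Lemma fin_supp_mulr {Y} (f g : Y -> R) l : fin_supp f l -> fin_supp (fun y => f y * g y) l.
Proof. intros [N H]; split; [exact N|]; intros y h; apply H; intro E; apply h; rewrite E; ring. Qed.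

Definition succ_of {A Y} (a : A) (z : A * Y + unit) : list Y :=
  match z with
  | inl (a', y) => if excluded_middle_informative (a' = a) then [y] else []
  | inr _ => []
  end.

Definition successors {A Y} (a : A) (l : list (A * Y + unit)) : list Y := flat_map (succ_of a) l.

Lemma In_successors {A Y} (a : A) l (y : Y) : In y (successors a l) <-> In (inl (a, y)) l.
Proof.
  unfold successors; rewrite in_flat_map; split.
  - intros [[[a' y']|u] [hz hy]]; simpl in hy; [|contradiction].
    destruct (excluded_middle_informative (a' = a)) as [<-|]; [|contradiction].
    destruct hy as [<-|[]]; exact hz.
  - intro h; exists (inl (a, y)); split; [exact h|]; simpl.
    destruct (excluded_middle_informative (a = a)); [left; reflexivity | contradiction].
Qed.

Lemma NoDup_successors {A Y} (a : A) (l : list (A * Y + unit)) : NoDup l -> NoDup (successors a l).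
Proof.
  induction 1 as [|z l Hz _ IH]; [constructor|].
  destruct z as [[a' y]|u]; simpl; [|exact IH].
  destruct (excluded_middle_informative (a' = a)) as [<-|]; [|exact IH].
  constructor; [rewrite In_successors; exact Hz | exact IH].
Qed.

Lemma infsum_zero : infinite_sum (fun _ => 0) 0.
Proof.
  intros eps he; exists 0%nat; intros n _; unfold Rdist.
  replace (sum_f_R0 (fun _ => 0) n) with 0
    by (induction n as [|n IH]; simpl; [|rewrite <- IH]; ring).
  rewrite Rminus_0_r, Rabs_R0; exact he.
Qed.

Lemma infsum_plus s1 s2 l1 l2 : infinite_sum s1 l1 -> infinite_sum s2 l2 ->
  infinite_sum (fun n => s1 n + s2 n) (l1 + l2).
Proof.
  intros h1 h2; change (Un_cv (fun n => sum_f_R0 (fun k => s1 k + s2 k) n) (l1 + l2)).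
  replace (fun n => sum_f_R0 (fun k => s1 k + s2 k) n)
    with (fun n => sum_f_R0 s1 n + sum_f_R0 s2 n)
    by (apply functional_extensionality; intro n; symmetry; apply sum_plus).
  apply CV_plus; assumption.
Qed.

Lemma infsum_scal c s l : infinite_sum s l -> infinite_sum (fun n => c * s n) (c * l).
Proof.
  intro h; change (Un_cv (fun n => sum_f_R0 (fun k => c * s k) n) (c * l)).
  replace (fun n => sum_f_R0 (fun k => c * s k) n) with (fun n => c * sum_f_R0 s n)
    by (apply functional_extensionality; intro n; rewrite scal_sum; apply sum_eq; intros; ring).
  apply CV_mult; [|exact h].
  intros eps he; exists 0%nat; intros; unfold Rdist; rewrite Rminus_diag, Rabs_R0; exact he.
Qed.

Lemma infsum_lsum {Y} (l : list Y) (g : Y -> nat -> R) (L : Y -> R) :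
  (forall y, In y l -> infinite_sum (g y) (L y)) ->
  infinite_sum (fun n => lsum l (fun y => g y n)) (lsum l L).
Proof.
  induction l as [|y l IH]; intro H; [exact infsum_zero|].
  apply infsum_plus; [apply H; left; reflexivity | apply IH; intros; apply H; right; assumption].
Qed.

(** * Inverse-CDF sampling *)

(* [l] cuts [0, lsum l w) into consecutive intervals of lengths [w z];
   [sample l w om] returns the [z] whose interval contains [om], together with
   the position of [om] in that interval rescaled to [0, 1). *)
Fixpoint sample {Z : Type} (l : list Z) (w : Z -> R) (om : R) : option (Z * R) :=
  match l with
  | nil => None
  | z :: l' => if Rlt_dec om (w z) then Some (z, om / w z) else sample l' w (om - w z)
  end.

Section Sample.
Variables (Z : Type) (w : Z -> R).
Hypothesis w_ge0 : forall z, 0 <= w z.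

Lemma sample_lt l om z r : sample l w om = Some (z, r) -> om < lsum l w.
Proof.
  revert om; induction l as [|z' l IH]; intros om H; simpl in H; [discriminate|].
  rewrite lsum_cons; destruct (Rlt_dec om (w z')).
  - assert (0 <= lsum l w) by (apply lsum_ge0; auto); lra.
  - specialize (IH _ H); lra.
Qed.

Lemma sample_some l om : 0 <= om < lsum l w -> exists z r, sample l w om = Some (z, r).
Proof.
  revert om; induction l as [|z l IH]; intros om H; [unfold lsum in H; simpl in H; lra|].
  rewrite lsum_cons in H; simpl; destruct (Rlt_dec om (w z)); [eauto|].
  apply IH; lra.
Qed.

Lemma sample_unit l om z r : 0 <= om -> sample l w om = Some (z, r) -> 0 <= r < 1.
Proof.
  revert om; induction l as [|z' l IH]; intros om Hom H; simpl in H; [discriminate|].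
  destruct (Rlt_dec om (w z')).
  - injection H as <- <-; split.
    + apply Rmult_le_pos; [lra | left; apply Rinv_0_lt_compat; lra].
    + apply Rmult_lt_reg_r with (w z'); [lra|].
      unfold Rdiv; rewrite Rmult_assoc, Rinv_l; lra.
  - eapply IH; [|exact H]; lra.
Qed.

Definition sample_set (l : list Z) (G : Z -> R -> Prop) : R -> Prop :=
  fun om => 0 <= om /\ match sample l w om with Some (z, r) => G z r | None => False end.

Lemma sample_set_bounded l G : bounded (sample_set l G).
Proof.
  exists 0, (lsum l w); intros om [H0 H].
  destruct (sample l w om) as [[z r]|] eqn:E; [apply sample_lt in E; lra | contradiction].
Qed.

Lemma sample_set_cons z l G : sample_set (z :: l) G =
  (fun om => (0 <= om < w z /\ G z (om / w z)) \/ sample_set l G (om - w z)).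
Proof.
  apply pred_ext; intro om; unfold sample_set; simpl.
  pose proof (w_ge0 z); destruct (Rlt_dec om (w z)); split.
  - tauto.
  - intros [h | [h _]]; [tauto | lra].
  - intros [h1 h2]; right; split; [lra | exact h2].
  - intros [[[h1 h2] _] | [h1 h2]]; [lra | split; [lra | exact h2]].
Qed.

Lemma sample_set_len l G : (forall z, meas (G z)) -> (forall z r, G z r -> 0 <= r < 1) ->
  meas (sample_set l G) /\ len (sample_set l G) = lsum l (fun z => w z * len (G z)).
Proof.
  intros mG G01; induction l as [|z l [IHm IHl]].
  - replace (sample_set [] G) with (fun _ : R => False)
      by (apply pred_ext; unfold sample_set; simpl; tauto).
    split; [apply meas0 | apply len0].
  - destruct (len_rescale (G z) (w z) (mG z) (G01 z) (w_ge0 z)) as [m1 [b1 l1]].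
    destruct (len_shift _ (w z) IHm (sample_set_bounded l G)) as [m2 [b2 l2]].
    rewrite sample_set_cons; split; [apply measU; assumption|].
    rewrite lenU, l1, l2, IHl, lsum_cons; auto.
    intros om [[h1 h2] _] [h3 _]; lra.
Qed.

End Sample.

(** * Words and the sigma-algebra on them *)

Lemma wapp_app {A} (s r : list A) v : wapp (s ++ r) v = wapp s (wapp r v).
Proof. apply fold_right_app. Qed.

Lemma wapp_Fin {A} (s r : list A) : wapp s (Fin r) = Fin (s ++ r).
Proof.
  induction s as [|a s IH]; [reflexivity|].
  simpl; fold (wapp s (Fin r)); rewrite IH; reflexivity.
Qed.

Lemma wcons_inj {A} (a b : A) v w : wcons a v = wcons b w -> a = b /\ v = w.
Proof.
  destruct v as [s|f], w as [t|g]; simpl; intro H; try discriminate.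
  - injection H; intros; subst; auto.
  - injection H; intro Hf; split; [exact (f_equal (fun h => h 0%nat) Hf)|].
    f_equal; apply functional_extensionality; intro n; exact (f_equal (fun h => h (S n)) Hf).
Qed.

Lemma wcons_eq_Fin {A} (a : A) v t : wcons a v = Fin t -> exists t', v = Fin t' /\ t = a :: t'.
Proof. destruct v; simpl; intro H; [injection H; intros; subst; eauto | discriminate]. Qed.

Lemma wcons_neq_nil {A} (a : A) v : wcons a v <> Fin nil.
Proof. intro H; destruct (wcons_eq_Fin _ _ _ H) as [t [_ E]]; discriminate. Qed.

Lemma wapp_eq_Fin {A} (s : list A) v t : wapp s v = Fin t -> exists r, v = Fin r /\ t = s ++ r.
Proof.
  revert t; induction s as [|a s IH]; intros t H; [exists t; auto|].
  destruct (wcons_eq_Fin _ _ _ H) as [t' [H1 ->]]; destruct (IH _ H1) as [r [-> ->]].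
  exists r; auto.
Qed.

Lemma wapp_eq {A} (s t : list A) v w : wapp s v = wapp t w ->
  (exists r, t = s ++ r /\ v = wapp r w) \/ (exists r, s = t ++ r /\ w = wapp r v).
Proof.
  revert t; induction s as [|a s IH]; intros t H; [left; exists t; auto|].
  destruct t as [|b t]; [right; exists (a :: s); auto|].
  destruct (wcons_inj _ _ _ _ H) as [<- H'].
  destruct (IH t H') as [[r [-> ->]]|[r [-> ->]]]; [left | right]; exists r; auto.
Qed.

(* Corecursion into [word A], characterized by [unfold_None] and [unfold_Some].  As
   [word] is not coinductive, the word is assembled from its letters [letter n s] and
   is finite exactly when one of them is missing. *)
Section Unfold.
Variables (A St : Type) (obs : St -> option (A * St)).

Fixpoint letter (n : nat) (s : St) : option A :=
  match obs s with
  | Some (a, s') => match n with O => Some a | S k => letter k s' end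
  | None => None
  end.

Fixpoint letters (n : nat) (s : St) : list A :=
  match n with
  | O => nil
  | S k => match obs s with Some (a, s') => a :: letters k s' | None => nil end
  end.

Definition option_get (o : option A) : o <> None -> A :=
  match o as o0 return o0 <> None -> A with
  | Some a => fun _ => a
  | None => fun H => False_rect _ (H eq_refl)
  end.

Lemma option_get_ext o1 o2 p1 p2 : o1 = o2 -> option_get o1 p1 = option_get o2 p2.
Proof. intro E; subst o1; destruct o2; [reflexivity | contradiction]. Qed.

Lemma letter_total s : ~ (exists n, letter n s = None) -> forall n, letter n s <> None.
Proof. intros H n E; apply H; exists n; exact E. Qed.

Definition unfold_word (s : St) : word A :=
  match excluded_middle_informative (exists n, letter n s = None) with
  | left H => Fin (letters (proj1_sig (constructive_indefinite_description _ H)) s)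
  | right H => Inf (fun n => option_get (letter n s) (letter_total s H n))
  end.

Lemma letters_stop n m s : letter n s = None -> letter m s = None -> letters n s = letters m s.
Proof.
  revert m s; induction n as [|n IH]; intros [|m] s Hn Hm; simpl in *; try reflexivity;
    destruct (obs s) as [[a s']|]; try discriminate; try reflexivity.
  f_equal; apply IH; assumption.
Qed.

Lemma unfold_None s : obs s = None -> unfold_word s = Fin nil.
Proof.
  intro Hs; unfold unfold_word; destruct (excluded_middle_informative _) as [H|H].
  - destruct (constructive_indefinite_description _ H) as [[|n] Hn]; simpl;
      rewrite ?Hs; reflexivity.
  - exfalso; apply H; exists 0%nat; simpl; rewrite Hs; reflexivity.
Qed.

Lemma unfold_Some s a s' : obs s = Some (a, s') -> unfold_word s = wcons a (unfold_word s').
Proof.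
  intro Hs.
  assert (HS : forall k, letter (S k) s = letter k s') by (intro; simpl; rewrite Hs; reflexivity).
  assert (H0 : letter 0 s = Some a) by (simpl; rewrite Hs; reflexivity).
  unfold unfold_word at 1; destruct (excluded_middle_informative _) as [H|H].
  - destruct (constructive_indefinite_description _ H) as [[|n] Hn]; simpl proj1_sig;
      [congruence|].
    rewrite HS in Hn; unfold unfold_word; destruct (excluded_middle_informative _) as [H'|H'];
      [| exfalso; apply H'; exists n; exact Hn].
    destruct (constructive_indefinite_description _ H') as [m Hm]; simpl.
    rewrite Hs; do 2 f_equal; apply letters_stop; assumption.
  - unfold unfold_word; destruct (excluded_middle_informative _) as [[k Hk]|H'].
    + exfalso; apply H; exists (S k); rewrite HS; exact Hk.
    + simpl; f_equal; apply functional_extensionality; intros [|k].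
      * rewrite (option_get_ext _ (Some a) _ (fun E : Some a = None => ltac:(discriminate)) H0).
        reflexivity.
      * apply option_get_ext, HS.
Qed.

End Unfold.

Lemma wsingle_cons {A} (a : A) s : wsingle (a :: s) = wprefix a (wsingle s).
Proof.
  apply pred_ext; intro v; unfold wsingle, wprefix; split.
  - intros ->; exists (Fin s); auto.
  - intros [v' [-> ->]]; reflexivity.
Qed.

Lemma wcyl_cons {A} (a : A) s : wcyl (a :: s) = wprefix a (wcyl s).
Proof.
  apply pred_ext; intro v; unfold wcyl, wprefix; split.
  - intros [v' ->]; exists (wapp s v'); split; [exists v'|]; reflexivity.
  - intros [v'' [[v' ->] ->]]; exists v'; reflexivity.
Qed.

Lemma wcyl_nil {A} : wcyl nil = @wfull A.
Proof.
  apply pred_ext; intro v; unfold wcyl, wfull; split; [auto | intros _; exists v; reflexivity].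
Qed.

Lemma subprob_compl {A} (m : wset A -> R) B : is_subprob m -> measurable B ->
  m (wcompl B) = m (@wfull A) - m B.
Proof.
  intros [m0 [_ [m_sigma _]]] mB.
  set (F := fun n : nat => match n with 0%nat => B | 1%nat => wcompl B | _ => @wempty A end).
  assert (mF : forall n, measurable (F n))
    by (intros [|[|n]]; simpl; [exact mB | apply meas_compl, mB | apply meas_empty]).
  assert (dF : forall i j v, i <> j -> F i v -> F j v -> False)
    by (intros [|[|i]] [|[|j]] v nij; simpl; unfold wcompl, wempty; tauto).
  assert (UF : wbigcup F = @wfull A).
  { apply pred_ext; intro v; unfold wbigcup, wfull; split; [auto | intros _].
    destruct (classic (B v)); [exists 0%nat | exists 1%nat]; assumption. }
  assert (H2 : infinite_sum (fun n => m (F n)) (m B + m (wcompl B))).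
  { intros eps he; exists 1%nat; intros [|n] hn; [lia|].
    replace (sum_f_R0 (fun n => m (F n)) (S n)) with (m B + m (wcompl B)).
    - unfold Rdist; rewrite Rminus_diag, Rabs_R0; exact he.
    - clear hn; induction n as [|n IH]; [reflexivity|].
      rewrite tech5, <- IH; simpl F; rewrite m0; ring. }
  pose proof (m_sigma F mF dF) as H1; rewrite UF in H1.
  rewrite (uniqueness_sum _ _ _ H1 H2); ring.
Qed.

Definition generator {A} (S : wset A) : Prop :=
  S = @wempty A \/ (exists s, S = wsingle s) \/ (exists s, S = wcyl s).

Lemma generator_single_cyl {A} (s t : list A) : generator (fun v => wsingle s v /\ wcyl t v).
Proof.
  destruct (classic (exists r, s = t ++ r)) as [[r ->]|hn].
  - right; left; exists (t ++ r); apply pred_ext; intro v; unfold wsingle, wcyl.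
    split; [tauto|].
    intros ->; split; [reflexivity | exists (Fin r); rewrite wapp_Fin; reflexivity].
  - left; apply pred_ext; intro v; unfold wsingle, wcyl, wempty; split; [|tauto].
    intros [-> [v' E]]; destruct (wapp_eq_Fin _ _ _ (eq_sym E)) as [r [_ Er]]; eauto.
Qed.

Lemma generator_cyl_cyl {A} (s t : list A) : generator (fun v => wcyl s v /\ wcyl t v).
Proof.
  destruct (classic (exists r, t = s ++ r)) as [[r ->]|hn1];
    [|destruct (classic (exists r, s = t ++ r)) as [[r ->]|hn2]].
  - right; right; exists (s ++ r); apply pred_ext; intro v; unfold wcyl; split; [tauto|].
    intros [v' ->]; split; [exists (wapp r v'); apply wapp_app | exists v'; reflexivity].
  - right; right; exists (t ++ r); apply pred_ext; intro v; unfold wcyl; split; [tauto|].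
    intros [v' ->]; split; [exists v'; reflexivity | exists (wapp r v'); apply wapp_app].
  - left; apply pred_ext; intro v; unfold wcyl, wempty; split; [|tauto].
    intros [[v1 ->] [v2 E]]; destruct (wapp_eq _ _ _ _ E) as [[r [-> _]]|[r [-> _]]]; eauto.
Qed.

Lemma generator_inter {A} (S T : wset A) : generator S -> generator T ->
  generator (fun v => S v /\ T v).
Proof.
  assert (comm : forall S T : wset A, (fun v => S v /\ T v) = (fun v => T v /\ S v))
    by (intros; apply pred_ext; tauto).
  assert (empty_l : forall T : wset A, generator (fun v => @wempty A v /\ T v))
    by (intro; left; apply pred_ext; unfold wempty; tauto).
  intros [->|[[s ->]|[s ->]]] [->|[[t ->]|[t ->]]];
    try solve [apply empty_l | rewrite comm; apply empty_l | apply generator_single_cyl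
              | rewrite comm; apply generator_single_cyl | apply generator_cyl_cyl].
  destruct (classic (s = t)) as [<-|ne]; [right; left; exists s; apply pred_ext; tauto|].
  left; apply pred_ext; intro v; unfold wsingle, wempty; split; [intros [-> E]; congruence | tauto].
Qed.

Lemma subprob_unique {A} (m1 m2 : wset A -> R) : is_subprob m1 -> is_subprob m2 ->
  (forall S, generator S -> m1 S = m2 S) -> forall S, measurable S -> m1 S = m2 S.
Proof.
  intros sp1 sp2 Hgen S mS.
  assert (mT : measurable (@wfull A)) by (rewrite <- wcyl_nil; apply meas_cyl).
  assert (eT : m1 (@wfull A) = m2 (@wfull A))
    by (apply Hgen; right; right; exists nil; symmetry; apply wcyl_nil).
  refine (proj2 (pi_lambda (word A) generator (fun S => measurable S /\ m1 S = m2 S)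
    (@generator_inter A) (conj mT eT) _ _ _ S _)).
  - intros B [mB eB]; split; [apply meas_compl, mB|].
    change (m1 (wcompl B) = m2 (wcompl B)).
    rewrite (subprob_compl _ _ sp1 mB), (subprob_compl _ _ sp2 mB), eT, eB; reflexivity.
  - intros F dF HF; split; [apply meas_bigcup; intro n; apply HF|].
    apply (uniqueness_sum (fun n => m2 (F n)));
      [| apply sp2; [intro n; apply HF | exact dF]].
    replace (fun n => m2 (F n)) with (fun n => m1 (F n))
      by (apply functional_extensionality; intro n; apply HF).
    apply sp1; [intro n; apply HF | exact dF].
  - intros B hB; split; [destruct hB as [->|[[s ->]|[s ->]]]; constructor | apply Hgen, hB].
  - intros P hG hC hU; clear - mS hG hC hU.
    induction mS; [apply hG; left | apply hG; right; left | apply hG; right; right | | ];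
      eauto.
Qed.

(** * The random run of the system *)

Section Run.
Variables (A X : Type) (alpha : X -> (A * X + unit) -> R).
Hypothesis alpha_P : forall x, isP (alpha x).

Definition supp (x : X) : list (A * X + unit) :=
  proj1_sig (constructive_indefinite_description _ (proj1 (proj2 (alpha_P x)))).

Lemma supp_spec x : fin_supp (alpha x) (supp x).
Proof. exact (proj2_sig (constructive_indefinite_description _ _)). Qed.

Lemma alpha_ge0 x z : 0 <= alpha x z.
Proof. apply (proj1 (alpha_P x)). Qed.

Lemma alpha_le1 x z : alpha x z <= 1.
Proof. apply (proj1 (alpha_P x)). Qed.

Lemma lsum_alpha x : lsum (supp x) (alpha x) = 1.
Proof. rewrite <- (fsum_lsum _ _ (supp_spec x)); apply (proj2 (proj2 (alpha_P x))). Qed.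

Definition step (x : X) (om : R) : option ((A * X + unit) * R) := sample (supp x) (alpha x) om.

Definition run (x : X) (om : R) : word A :=
  unfold_word _ _
    (fun s => match step (fst s) (snd s) with
              | Some (inl (a, y), r) => Some (a, (y, r))
              | _ => None
              end)
    (x, om).

Definition emit (z : A * X + unit) (r : R) : word A :=
  match z with inl (a, y) => wcons a (run y r) | inr _ => Fin nil end.

Lemma run_step x om z r : step x om = Some (z, r) -> run x om = emit z r.
Proof.
  intro Hs; unfold run; destruct z as [[a y]|[]]; simpl.
  - apply unfold_Some; simpl; rewrite Hs; reflexivity.
  - apply unfold_None; simpl; rewrite Hs; reflexivity.
Qed.

Definition run_preimage (x : X) (S : wset A) : R -> Prop := fun om => 0 <= om < 1 /\ S (run x om).

Definition run_law (x : X) (S : wset A) : R := len (run_preimage x S).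

Definition emit_preimage (S : wset A) (z : A * X + unit) : R -> Prop :=
  fun r => 0 <= r < 1 /\ S (emit z r).

Lemma run_preimage_step x S :
  run_preimage x S = sample_set _ (alpha x) (supp x) (emit_preimage S).
Proof.
  apply pred_ext; intro om; unfold run_preimage, sample_set, emit_preimage; fold (step x om).
  split.
  - intros [[h0 h1] hS].
    destruct (sample_some _ (alpha x) (supp x) om) as [z [r Hs]];
      [rewrite lsum_alpha; lra|]; fold (step x om) in Hs.
    rewrite (run_step _ _ _ _ Hs) in hS; rewrite Hs.
    split; [exact h0|]; split; [exact (sample_unit _ _ _ _ _ _ h0 Hs) | exact hS].
  - intros [h0 h]; destruct (step x om) as [[z r]|] eqn:Hs; [|contradiction].
    destruct h as [_ hS]; rewrite (run_step _ _ _ _ Hs); split; [|exact hS].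
    split; [exact h0|]; rewrite <- (lsum_alpha x); exact (sample_lt _ _ (alpha_ge0 x) _ _ _ _ Hs).
Qed.

Lemma run_law_step x S : (forall z, meas (emit_preimage S z)) ->
  meas (run_preimage x S) /\
  run_law x S = lsum (supp x) (fun z => alpha x z * len (emit_preimage S z)).
Proof.
  intro mS; unfold run_law; rewrite run_preimage_step.
  apply sample_set_len; [apply alpha_ge0 | exact mS | intros z r []; auto].
Qed.

Lemma run_law_full x : meas (run_preimage x (@wfull A)) /\ run_law x (@wfull A) = 1.
Proof.
  unfold run_law; replace (run_preimage x (@wfull A)) with (fun om => 0 <= om < 1)
    by (apply pred_ext; unfold run_preimage, wfull; tauto).
  split; [apply meas_Ico | rewrite len_Ico; lra].
Qed.

Lemma run_law_nil x :
  meas (run_preimage x (wsingle nil)) /\ run_law x (wsingle nil) = alpha x (inr tt).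
Proof.
  assert (Hz : forall z, meas (emit_preimage (wsingle nil) z) /\
                         len (emit_preimage (wsingle nil) z) = dirac (inr tt) z).
  { intro z; unfold dirac; destruct (excluded_middle_informative (z = inr tt)) as [->|ne].
    - replace (emit_preimage _ _) with (fun r => 0 <= r < 1)
        by (apply pred_ext; unfold emit_preimage, wsingle; simpl; tauto).
      split; [apply meas_Ico | rewrite len_Ico; lra].
    - replace (emit_preimage _ z) with (fun _ : R => False).
      + split; [apply meas0 | apply len0].
      + apply pred_ext; intro r; unfold emit_preimage, wsingle; split; [contradiction|].
        destruct z as [[a y]|[]]; [intros [_ E]; exact (wcons_neq_nil _ _ E) | contradiction]. }
  destruct (run_law_step x _ (fun z => proj1 (Hz z))) as [m ->]; split; [exact m|].
  rewrite <- (fsum_dirac (inr tt) (alpha x)), (fsum_lsum _ (supp x)).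
  - apply lsum_ext; intros z _; rewrite (proj2 (Hz z)); ring.
  - destruct (supp_spec x) as [N Hs]; split; [exact N|]; intros z h; apply Hs.
    intro E; apply h; rewrite E; ring.
Qed.

Lemma run_law_prefix x a S : (forall y, meas (run_preimage y S)) ->
  meas (run_preimage x (wprefix a S)) /\
  run_law x (wprefix a S) = fsum (fun y => alpha x (inl (a, y)) * run_law y S).
Proof.
  intro mS.
  assert (Hz : forall z, meas (emit_preimage (wprefix a S) z) /\
     alpha x z * len (emit_preimage (wprefix a S) z) =
     lsum (succ_of a z) (fun y => alpha x (inl (a, y)) * run_law y S)).
  { intros [[a' y]|[]]; simpl; [destruct (excluded_middle_informative (a' = a)) as [<-|ne]|].
    - replace (emit_preimage _ _) with (run_preimage y S).
      + split; [exact (mS y) | unfold lsum, run_law; simpl; ring].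
      + apply pred_ext; intro r; unfold emit_preimage, run_preimage, wprefix; simpl.
        split; [intros [h hS]; split; [exact h | exists (run y r); auto]|].
        intros [h [v [hS E]]]; split; [exact h|].
        destruct (wcons_inj _ _ _ _ E) as [_ ->]; exact hS.
    - replace (emit_preimage _ _) with (fun _ : R => False);
        [split; [apply meas0 | rewrite len0; unfold lsum; simpl; ring]|].
      apply pred_ext; intro r; unfold emit_preimage, wprefix; simpl; split; [contradiction|].
      intros [_ [v [_ E]]]; exact (ne (proj1 (wcons_inj _ _ _ _ E))).
    - replace (emit_preimage _ _) with (fun _ : R => False);
        [split; [apply meas0 | rewrite len0; unfold lsum; simpl; ring]|].
      apply pred_ext; intro r; unfold emit_preimage, wprefix; simpl; split; [contradiction|].
      intros [_ [v [_ E]]]; exact (wcons_neq_nil _ _ (eq_sym E)). }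
  destruct (run_law_step x _ (fun z => proj1 (Hz z))) as [m ->]; split; [exact m|].
  destruct (supp_spec x) as [N Hs].
  rewrite (fsum_lsum _ (successors a (supp x))).
  - unfold successors; rewrite lsum_flat_map; apply lsum_ext; intros z _; apply Hz.
  - split; [apply NoDup_successors; exact N|]; intros y h; apply In_successors, Hs.
    intro E; apply h; rewrite E; ring.
Qed.

Lemma run_preimage_empty x : run_preimage x (@wempty A) = fun _ => False.
Proof. apply pred_ext; unfold run_preimage, wempty; tauto. Qed.

Lemma run_preimage_bigcup x F :
  run_preimage x (wbigcup F) = fun om => exists n, run_preimage x (F n) om.
Proof.
  apply pred_ext; intro om; unfold run_preimage, wbigcup; split;
    [intros [h1 [n h2]]; eauto | intros [n [h1 h2]]; split; eauto].
Qed.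

Lemma run_preimage_meas S : measurable S -> forall x, meas (run_preimage x S).
Proof.
  induction 1 as [| s | s | S _ IH | F _ IH]; intro x.
  - rewrite run_preimage_empty; apply meas0.
  - revert x; induction s as [|a s IHs]; intro x; [apply run_law_nil|].
    rewrite wsingle_cons; apply run_law_prefix; exact IHs.
  - revert x; induction s as [|a s IHs]; intro x; [rewrite wcyl_nil; apply run_law_full|].
    rewrite wcyl_cons; apply run_law_prefix; exact IHs.
  - replace (run_preimage x (wcompl S)) with
      (fun om => (0 <= om < 1) /\ ~ run_preimage x S om)
      by (apply pred_ext; unfold run_preimage, wcompl; tauto).
    apply measI; [apply meas_Ico | apply measC, IH].
  - rewrite run_preimage_bigcup; apply bigcupT_meas; intro n; apply IH.
Qed.

Lemma run_law_sigma_additive x (F : nat -> wset A) : (forall n, measurable (F n)) ->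
  (forall i j v, i <> j -> F i v -> F j v -> False) ->
  infinite_sum (fun n => run_law x (F n)) (run_law x (wbigcup F)).
Proof.
  intros mF dF; unfold run_law; rewrite run_preimage_bigcup; apply len_sigma_additive.
  - intro n; apply run_preimage_meas, mF.
  - exists 0, 1; intros n om [h _]; lra.
  - intros i j om nij [_ hi] [_ hj]; exact (dF i j _ nij hi hj).
Qed.

Definition sem (u : X -> R) (S : wset A) : R := fsum (fun x => u x * run_law x S).

Lemma sem_lsum u lu S : fin_supp u lu -> sem u S = lsum lu (fun x => u x * run_law x S).
Proof. intro Hu; apply fsum_lsum, fin_supp_mulr, Hu. Qed.

Lemma sem_dirac x S : sem (dirac x) S = run_law x S.
Proof. exact (fsum_dirac x (fun y => run_law y S)). Qed.

Lemma sem_subprob u : isD u -> is_subprob (sem u).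
Proof.
  intros [u01 [[lu Hu] u_le1]].
  split; [|split; [|split]]; [| intros S _ | intros F mF dF |];
    rewrite !(sem_lsum u lu) by exact Hu.
  - rewrite <- (lsum_const0 lu); apply lsum_ext; intros x _.
    unfold run_law; rewrite run_preimage_empty, len0; ring.
  - apply lsum_ge0; intros x _; apply Rmult_le_pos; [apply u01 | apply len_ge0].
  - replace (fun n => sem u (F n)) with (fun n => lsum lu (fun x => u x * run_law x (F n)))
      by (apply functional_extensionality; intro n; symmetry; apply sem_lsum, Hu).
    apply infsum_lsum; intros x _; apply infsum_scal, run_law_sigma_additive; assumption.
  - rewrite (fsum_lsum u lu Hu) in u_le1; rewrite (lsum_ext _ _ u); [exact u_le1|].
    intros x _; rewrite (proj2 (run_law_full x)); ring.
Qed.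

Lemma alpha_succ_le1 x a : fsum (fun y => alpha x (inl (a, y))) <= 1.
Proof.
  destruct (supp_spec x) as [N Hs].
  rewrite (fsum_lsum _ (successors a (supp x))), <- (lsum_alpha x).
  - unfold successors; rewrite lsum_flat_map; apply lsum_le.
    intros [[a' y]|[]] _; simpl; [destruct (excluded_middle_informative (a' = a)) as [<-|]|];
      unfold lsum; simpl; rewrite ?Rplus_0_r; [lra | apply alpha_ge0 | apply alpha_ge0].
  - split; [apply NoDup_successors; exact N | intros y h; apply In_successors, Hs, h].
Qed.

Definition next_support (a : A) (lu : list X) : list X :=
  nodup (fun y1 y2 => excluded_middle_informative (y1 = y2))
    (flat_map (fun x => successors a (supp x)) lu).

Lemma fin_supp_succ x a lu :
  In x lu -> fin_supp (fun y => alpha x (inl (a, y))) (next_support a lu).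
Proof.
  intro hx; split; [apply NoDup_nodup|]; intros y h.
  apply nodup_In, in_flat_map; exists x; split; [exact hx|].
  apply In_successors, (proj2 (supp_spec x)), h.
Qed.

Lemma tau_lsum u lu a y : fin_supp u lu ->
  tau alpha a u y = lsum lu (fun x => u x * alpha x (inl (a, y))).
Proof. intro Hu; apply fsum_lsum, fin_supp_mulr, Hu. Qed.

Lemma fin_supp_tau u lu a : fin_supp u lu -> fin_supp (tau alpha a u) (next_support a lu).
Proof.
  intro Hu; split; [apply NoDup_nodup|]; intros y h; rewrite (tau_lsum u lu) in h by exact Hu.
  destruct (lsum_neq0 _ _ h) as [x [hx hxy]].
  apply (proj2 (fin_supp_succ x a lu hx)); intro E; apply hxy; rewrite E; ring.
Qed.

Lemma tau_isD u a : isD u -> isD (tau alpha a u).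
Proof.
  intros [u01 [[lu Hu] u_le1]]; rewrite (fsum_lsum u lu Hu) in u_le1.
  split; [|split; [exists (next_support a lu); apply fin_supp_tau, Hu|]].
  - intro y; rewrite (tau_lsum u lu) by exact Hu; split.
    + apply lsum_ge0; intros x _; apply Rmult_le_pos; [apply u01 | apply alpha_ge0].
    + eapply Rle_trans; [|exact u_le1]; apply lsum_le; intros x _.
      pose proof (alpha_le1 x (inl (a, y))); pose proof (alpha_ge0 x (inl (a, y))).
      pose proof (u01 x); nra.
  - rewrite (fsum_lsum _ _ (fin_supp_tau u lu a Hu)).
    rewrite (lsum_ext _ _ (fun y => lsum lu (fun x => u x * alpha x (inl (a, y)))))
      by (intros; apply tau_lsum, Hu).
    rewrite <- lsum_swap; eapply Rle_trans; [|exact u_le1]; apply lsum_le; intros x hx.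
    rewrite lsum_scal, <- (fsum_lsum _ _ (fin_supp_succ x a lu hx)).
    pose proof (alpha_succ_le1 x a); pose proof (u01 x); nra.
Qed.

Lemma sem_prefix u a S : isD u -> measurable S -> sem u (wprefix a S) = sem (tau alpha a u) S.
Proof.
  intros [_ [[lu Hu] _]] mS.
  rewrite (sem_lsum u lu), (sem_lsum _ (next_support a lu)) by (auto; apply fin_supp_tau, Hu).
  rewrite (lsum_ext lu _
    (fun x => lsum (next_support a lu) (fun y => u x * (alpha x (inl (a, y)) * run_law y S)))).
  - rewrite lsum_swap; apply lsum_ext; intros y _.
    rewrite (tau_lsum u lu) by exact Hu; rewrite Rmult_comm, <- lsum_scal.
    apply lsum_ext; intros; ring.
  - intros x hx; rewrite (proj2 (run_law_prefix x a S (run_preimage_meas S mS))), lsum_scal.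
    f_equal; apply fsum_lsum, fin_supp_mulr, fin_supp_succ, hx.
Qed.

Lemma sem_coalg_morphism : is_coalg_morphism alpha sem.
Proof.
  intros u Hu; split; [apply sem_subprob, Hu|]; split; [|split].
  - unfold sem, alpha1; f_equal; apply functional_extensionality; intro x.
    rewrite (proj2 (run_law_full x)), (proj2 (proj2 (alpha_P x))); reflexivity.
  - unfold sem, alphastar; f_equal; apply functional_extensionality; intro x.
    rewrite (proj2 (run_law_nil x)); reflexivity.
  - intros a S mS; apply sem_prefix; assumption.
Qed.

Lemma coalg_morphism_unique sem1 sem2 :
  is_coalg_morphism alpha sem1 -> is_coalg_morphism alpha sem2 ->
  forall u, isD u -> forall S, measurable S -> sem1 u S = sem2 u S.
Proof.
  intros H1 H2.
  assert (Hgen : forall s u, isD u ->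
    sem1 u (wsingle s) = sem2 u (wsingle s) /\ sem1 u (wcyl s) = sem2 u (wcyl s)).
  { induction s as [|a s IH]; intros u Hu;
      destruct (H1 u Hu) as [_ [f1 [n1 p1]]], (H2 u Hu) as [_ [f2 [n2 p2]]].
    - rewrite wcyl_nil, f1, f2, n1, n2; split; reflexivity.
    - rewrite wsingle_cons, wcyl_cons, !p1, !p2 by constructor; apply IH, tau_isD, Hu. }
  intros u Hu; apply subprob_unique; [apply H1, Hu | apply H2, Hu|].
  intros S [->|[[s ->]|[s ->]]]; [| apply Hgen, Hu | apply Hgen, Hu].
  rewrite (proj1 (proj1 (H1 u Hu))), (proj1 (proj1 (H2 u Hu))); reflexivity.
Qed.

End Run.

Theorem mainTheorem14 (A X : Type) (HA : exists l : list A, forall a, In a l)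
  (alpha : X -> (A * X + unit) -> R) (Halpha : forall x, isP (alpha x)) :
  exists sem : (X -> R) -> wset A -> R,
    is_coalg_morphism alpha sem /\
    (forall sem' : (X -> R) -> wset A -> R,
        is_coalg_morphism alpha sem' ->
        forall u, isD u -> forall S, measurable S -> sem' u S = sem u S) /\
    (forall u, isD u -> forall S, measurable S ->
        sem u S = fsum (fun x => u x * sem (dirac x) S)).
Proof.
  exists (sem A X alpha Halpha); split; [|split].
  - apply sem_coalg_morphism.
  - intros sem' Hsem'; apply (coalg_morphism_unique A X alpha Halpha);
      [exact Hsem' | apply sem_coalg_morphism].
  - intros u _ S _; unfold sem at 1; f_equal; apply functional_extensionality; intro x.
    rewrite sem_dirac; reflexivity.
Qed.
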